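(* Let $A\subseteq(0,\infty)$ be an open interval, let $n\ge 0$ be an integer, and let $f:A\to(0,\infty)$ be $n+1$ times Bigeometrically differentiable on $A$. Then for any $x,x+h\in A$ there exists a number $\theta\in(0,1)$ such that $$f(x+h)=\prod_{i=0}^{n}\left(f^{\pi(i)}(x)\right)^{\frac{\left(\ln\left(1+\frac{h}{x}\right)\right)^{i}}{i!}}\cdot\left(f^{\pi(n+1)}(x+\theta h)\right)^{\frac{\left(\ln\left(1+\frac{h}{x}\right)\right)^{n+1}}{(n+1)!}}.$$
   Context: For a positive differentiable function $g$, the Bigeometric derivative is $g^{\pi}(x)=\lim_{h\to0}\bigl(g((1+h)x)/g(x)\bigr)^{1/h}=\exp\{x\,g'(x)/g(x)\}$. Higher-order Bigeometric derivatives are defined by iteration: $f^{\pi(0)}=f$, $f^{\pi(k+1)}=(f^{\pi(k)})^{\pi}$; ''$n+1$ times Bigeometrically differentiable'' means these exist up to order $n+1$. *)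

From Stdlib Require Import Reals Factorial.
From Coquelicot Require Import Coquelicot.
Open Scope R_scope.

(* Bigeometric derivative of a positive differentiable g:
   g^pi(x) = exp (x * g'(x) / g(x))  (the closed form given in the context). *)
Definition bigeo (g : R -> R) : R -> R :=
  fun x => exp (x * Derive g x / g x).

Fixpoint bigeo_iter (k : nat) (f : R -> R) : R -> R :=
  match k with
  | O => f
  | S k' => bigeo (bigeo_iter k' f)
  end.

Definition inI (a b : Rbar) (y : R) : Prop := Rbar_lt a y /\ Rbar_lt y b.

From Stdlib Require Import Reals Factorial Lra Lia.
From Coquelicot Require Import Coquelicot.
Open Scope R_scope.

(* In log-log coordinates g_k(t) := ln f^{pi(k)}(e^t) the Bigeometric derivative
   becomes the ordinary one: g_k' = g_{k+1}.  The ordinary Taylor formula with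
   Lagrange remainder for g_0 between ln x and ln (x + h), with
   ln (x + h) - ln x = ln (1 + h/x), exponentiates to the product formula; as exp
   is increasing, the intermediate point e^z lies strictly between x and x + h. *)

Definition derive_chain (G : nat -> R -> R) (D : R -> Prop) (n : nat) : Prop :=
  forall k t, (k <= n)%nat -> D t -> is_derive (G k) t (G (S k) t).

Lemma ratio_in_unit p w q : p < w < q \/ q < w < p -> 0 < (w - p) / (q - p) < 1.
Proof.
  intros Hw.
  assert (Hpq : q - p <> 0) by lra.
  set (r := (w - p) / (q - p)).
  assert (Hr : w - p = r * (q - p)) by (unfold r; field; exact Hpq).
  destruct Hw; split; nra.
Qed.

Lemma sum_zero_pow (c : nat -> R) n :
  sum_f_R0 (fun m => 0 ^ m / INR (fact m) * c m) n = c 0%nat.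
Proof. induction n as [|n IHn]; simpl; [|rewrite IHn]; lra. Qed.

Lemma opp_sub_pow_sign u v d c m :
  (- v - - u) ^ m / d * ((-1) ^ m * c) = (v - u) ^ m / d * c.
Proof.
  replace (- v - - u) with (-1 * (v - u)) by ring.
  transitivity ((-1 * -1) ^ m * ((v - u) ^ m / d * c)).
  - rewrite !Rpow_mult_distr; unfold Rdiv; ring.
  - replace (-1 * -1) with 1 by ring. rewrite pow1. ring.
Qed.

Lemma exp_sum_prod (F P : nat -> R) n : (forall i, exp (F i) = P i) ->
  exp (sum_f_R0 F n) = prod_f_R0 P n.
Proof.
  intros HFP; induction n as [|n IHn]; simpl; [apply HFP|].
  rewrite exp_plus, IHn, HFP. reflexivity.
Qed.

Section DeriveChain.
Variables (G : nat -> R -> R) (D : R -> Prop) (n : nat).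
Hypotheses (HD : open D) (HG : derive_chain G D n).

Lemma Derive_n_chain m t : (m <= S n)%nat -> D t -> Derive_n (G 0%nat) m t = G m t.
Proof.
  revert t; induction m as [|m IHm]; intros t Hm Ht; [reflexivity|].
  simpl. rewrite (Derive_ext_loc _ (G m)).
  - apply is_derive_unique, HG; [lia|exact Ht].
  - apply (locally_open D); [exact HD| |exact Ht].
    intros s Hs; apply IHm; [lia|exact Hs].
Qed.

Lemma ex_derive_n_chain m t : (m <= S n)%nat -> D t -> ex_derive_n (G 0%nat) m t.
Proof.
  destruct m as [|m]; intros Hm Ht; simpl; [exact I|].
  apply (ex_derive_ext_loc (G m)).
  - apply (locally_open D); [exact HD| |exact Ht].
    intros s Hs; symmetry; apply Derive_n_chain; [lia|exact Hs].
  - eexists; apply HG; [lia|exact Ht].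
Qed.

Lemma taylor_lagrange_chain_lt u v : u < v -> (forall t, u <= t <= v -> D t) ->
  exists z, u < z < v /\ G 0%nat v =
    sum_f_R0 (fun m => (v - u) ^ m / INR (fact m) * G m u) n
    + (v - u) ^ S n / INR (fact (S n)) * G (S n) z.
Proof.
  intros Huv Hseg.
  destruct (Taylor_Lagrange (G 0%nat) n u v Huv) as [z [Hz E]].
  { intros t Ht k Hk; apply ex_derive_n_chain; [lia|apply Hseg; exact Ht]. }
  exists z; split; [exact Hz|]. rewrite E. f_equal.
  - apply sum_eq; intros i Hi. rewrite Derive_n_chain; [reflexivity|lia|apply Hseg; lra].
  - rewrite Derive_n_chain; [reflexivity|lia|apply Hseg; lra].
Qed.

End DeriveChain.

Lemma derive_chain_reflect G D n : derive_chain G D n ->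
  derive_chain (fun k t => (-1) ^ k * G k (- t)) (fun t => D (- t)) n.
Proof.
  intros HG k t Hk Ht.
  assert (Hopp := is_derive_comp (G k) Ropp t _ _ (HG k (- t) Hk Ht)
                    (is_derive_opp (fun s => s) t 1 (is_derive_id t))).
  replace ((-1) ^ S k * G (S k) (- t)) with ((-1) ^ k * scal (-1) (G (S k) (- t)))
    by (unfold scal; simpl; unfold mult; simpl; ring).
  exact (is_derive_scal _ t _ _ Hopp).
Qed.

Section TaylorLagrange.
Variables (G : nat -> R -> R) (D : R -> Prop) (n : nat).
Hypotheses (HD : open D) (HG : derive_chain G D n).

(* Coquelicot's [Taylor_Lagrange] needs [u < v]; the case [v < u] is reduced to it
   through the reflected chain of [derive_chain_reflect]. *)
Lemma taylor_lagrange_chain_gt u v : v < u -> (forall t, v <= t <= u -> D t) ->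
  exists z, v < z < u /\ G 0%nat v =
    sum_f_R0 (fun m => (v - u) ^ m / INR (fact m) * G m u) n
    + (v - u) ^ S n / INR (fact (S n)) * G (S n) z.
Proof.
  intros Hvu Hseg.
  assert (HDr : open (fun t => D (- t))).
  { apply (open_comp Ropp D); [|exact HD]. intros t _.
    apply continuity_pt_filterlim, continuity_pt_opp, continuity_pt_id. }
  destruct (taylor_lagrange_chain_lt _ _ n HDr (derive_chain_reflect G D n HG) (- u) (- v))
    as [z [Hz E]]; [lra|intros t Ht; apply Hseg; lra|].
  exists (- z); split; [lra|].
  rewrite !Ropp_involutive, pow_O, Rmult_1_l in E. rewrite E.
  f_equal; [apply sum_eq; intros i _|]; apply opp_sub_pow_sign.
Qed.

Lemma taylor_lagrange_chain u v : (forall t, Rmin u v <= t <= Rmax u v -> D t) ->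
  exists theta, 0 < theta < 1 /\ G 0%nat v =
    sum_f_R0 (fun m => (v - u) ^ m / INR (fact m) * G m u) n
    + (v - u) ^ S n / INR (fact (S n)) * G (S n) (u + theta * (v - u)).
Proof.
  intros Hseg.
  destruct (Rtotal_order u v) as [Huv|[<-|Hvu]].
  - rewrite Rmin_left, Rmax_right in Hseg by lra.
    destruct (taylor_lagrange_chain_lt G D n HD HG u v Huv Hseg) as [z [Hz E]].
    exists ((z - u) / (v - u)); split; [apply ratio_in_unit; lra|].
    replace (u + (z - u) / (v - u) * (v - u)) with z by (field; lra). exact E.
  - exists (1 / 2); split; [lra|].
    rewrite Rminus_diag, sum_zero_pow. simpl. unfold Rdiv. ring.
  - rewrite Rmin_right, Rmax_left in Hseg by lra.
    destruct (taylor_lagrange_chain_gt u v Hvu Hseg) as [z [Hz E]].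
    exists ((z - u) / (v - u)); split; [apply ratio_in_unit; lra|].
    replace (u + (z - u) / (v - u) * (v - u)) with z by (field; lra). exact E.
Qed.

End TaylorLagrange.

Lemma increasing_interior_point (F : R -> R) u v theta :
  (forall p q, p < q -> F p < F q) -> 0 < theta < 1 ->
  exists theta', 0 < theta' < 1 /\ F (u + theta * (v - u)) = F u + theta' * (F v - F u).
Proof.
  intros HF Htheta.
  destruct (Req_dec u v) as [<-|Huv].
  - exists (1 / 2); split; [lra|]. rewrite Rminus_diag, Rmult_0_r, Rplus_0_r. ring.
  - set (z := u + theta * (v - u)).
    assert (Hz : F u < F z < F v \/ F v < F z < F u).
    { destruct (Rlt_or_le u v) as [Hlt|Hle]; [left|right]; split; apply HF;
        unfold z; nra. }
    exists ((F z - F u) / (F v - F u)); split; [exact (ratio_in_unit _ _ _ Hz)|].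
    field. lra.
Qed.

Definition loglog (F : R -> R) : R -> R := fun t => ln (F (exp t)).

Lemma is_derive_loglog F t : 0 < F (exp t) -> ex_derive F (exp t) ->
  is_derive (loglog F) t (loglog (bigeo F) t).
Proof.
  intros HF HdF.
  assert (Hd := is_derive_comp ln (fun s => F (exp s)) t _ _ (is_derive_ln _ HF)
     (is_derive_comp F exp t _ _ (Derive_correct _ _ HdF) (is_derive_exp t))).
  unfold loglog, bigeo. rewrite ln_exp.
  replace (exp t * Derive F (exp t) / F (exp t)) with
     (scal (scal (exp t) (Derive F (exp t))) (/ F (exp t)))
    by (unfold scal; simpl; unfold mult; simpl; field; lra).
  exact Hd.
Qed.

Section BigeometricChain.
Variables (A : R -> Prop) (f : R -> R) (n : nat).
Hypothesis Hpos : forall y, A y -> 0 < f y.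
Hypothesis Hdiff : forall k, (k <= n)%nat -> forall y, A y -> ex_derive (bigeo_iter k f) y.

Lemma bigeo_iter_pos k y : A y -> 0 < bigeo_iter k f y.
Proof. destruct k; intros Hy; [exact (Hpos y Hy)|apply exp_pos]. Qed.

Lemma derive_chain_bigeo_iter :
  derive_chain (fun k => loglog (bigeo_iter k f)) (fun t => A (exp t)) n.
Proof.
  intros k t Hk Ht.
  apply is_derive_loglog; [apply bigeo_iter_pos|apply Hdiff]; assumption.
Qed.

End BigeometricChain.

Lemma inI_pos a b y : Rbar_le (Finite 0) a -> inI a b y -> 0 < y.
Proof. intros Ha [Hay _]. exact (Rbar_le_lt_trans _ _ _ Ha Hay). Qed.

Lemma open_inI_exp a b : open (fun t => inI a b (exp t)).
Proof.
  apply (open_comp exp (inI a b)); [intros t _; apply continuous_exp|].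
  apply open_and; [apply open_Rbar_gt|apply open_Rbar_lt].
Qed.

Lemma inI_exp_segment a b u v t : inI a b (exp u) -> inI a b (exp v) ->
  Rmin u v <= t <= Rmax u v -> inI a b (exp t).
Proof.
  assert (Hmono : forall p q, p <= q -> exp p <= exp q).
  { intros p q [Hpq|<-]; [left; exact (exp_increasing p q Hpq)|right; reflexivity]. }
  assert (Hbetween : forall p q, p <= t <= q -> inI a b (exp p) -> inI a b (exp q) ->
    inI a b (exp t)).
  { intros p q Ht [Hp _] [_ Hq]. split.
    - eapply Rbar_lt_le_trans; [exact Hp|]. apply Hmono; lra.
    - eapply Rbar_le_lt_trans; [|exact Hq]. apply Hmono; lra. }
  intros Hu Hv Ht. destruct (Rle_dec u v).
  - rewrite Rmin_left, Rmax_right in Ht by lra. exact (Hbetween u v Ht Hu Hv).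
  - rewrite Rmin_right, Rmax_left in Ht by lra. exact (Hbetween v u Ht Hv Hu).
Qed.

Theorem theorem3 (a b : Rbar) (n : nat) (f : R -> R)
  (Ha : Rbar_le (Finite 0) a) (Hab : Rbar_lt a b)
  (Hpos : forall y, inI a b y -> 0 < f y)
  (Hdiff : forall k, (k <= n)%nat ->
     forall y, inI a b y -> ex_derive (bigeo_iter k f) y)
  (x h : R) (Hx : inI a b x) (Hxh : inI a b (x + h)) :
  exists theta, 0 < theta < 1 /\
    f (x + h) =
      prod_f_R0 (fun i => Rpower (bigeo_iter i f x)
                            ((ln (1 + h / x)) ^ i / INR (fact i))) n
      * Rpower (bigeo_iter (S n) f (x + theta * h))
               ((ln (1 + h / x)) ^ (S n) / INR (fact (S n))).
Proof.
  assert (Hx0 := inI_pos a b x Ha Hx). assert (Hxh0 := inI_pos a b (x + h) Ha Hxh).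
  set (u := ln x). set (v := ln (x + h)).
  assert (Eu : exp u = x) by exact (exp_ln x Hx0).
  assert (Ev : exp v = x + h) by exact (exp_ln (x + h) Hxh0).
  replace (ln (1 + h / x)) with (v - u) by (unfold u, v; rewrite <- ln_div by lra;
    f_equal; field; lra).
  destruct (taylor_lagrange_chain _ _ n (open_inI_exp a b)
              (derive_chain_bigeo_iter (inI a b) f n Hpos Hdiff) u v) as [theta [Htheta E]].
  { intros t; apply inI_exp_segment; [rewrite Eu|rewrite Ev]; assumption. }
  destruct (increasing_interior_point exp u v theta exp_increasing Htheta)
    as [theta' [Htheta' Ez]].
  rewrite Eu, Ev in Ez. replace (x + h - x) with h in Ez by ring.
  exists theta'; split; [exact Htheta'|].
  rewrite <- Ev, <- (exp_ln (f (exp v))) by (apply Hpos; rewrite Ev; exact Hxh).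
  change (ln (f (exp v))) with (loglog (bigeo_iter 0 f) v).
  rewrite E, exp_plus. f_equal.
  - apply exp_sum_prod; intros i. unfold Rpower, loglog. rewrite Eu. reflexivity.
  - unfold Rpower, loglog. rewrite Ez. reflexivity.
Qed.
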